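(* There is an absolute constant $C>0$ such that the following holds. Let the mesh be uniform with width $h>0$, i.e. $x_{i+1/2}=x_{1/2}+ih$, and let $(\bar v_i)_{i\in\mathbb{Z}}$ be a bounded real sequence with $\sum_{i}|\bar v_{i+1}-\bar v_i|<\infty$. Let $v^\pm_{i+1/2}$ be the cell interface values of the second order ($k=2$) ENO reconstruction of $(\bar v_i)$. Then $$\sum_{i\in\mathbb{Z}}|\bar v_{i+1}-\bar v_i|^{3}\le C\,\Bigl(\sup_{i}|\bar v_i|\Bigr)\sum_{i\in\mathbb{Z}}(\bar v_{i+1}-\bar v_i)\bigl(v^+_{i+1/2}-v^-_{i+1/2}\bigr).$$ In particular $C$ is independent of $(\bar v_i)$ and of $h$.
   Context: Mesh: cells $I_i=[x_{i-1/2},x_{i+1/2})$. Given a real sequence $(\bar v_i)_{i\in\mathbb{Z}}$, the divided differences are $[\bar v_i]=\bar v_i$ and, for $i<j$, $[\bar v_i,\dots,\bar v_j]=\frac{[\bar v_{i+1},\dots,\bar v_j]-[\bar v_i,\dots,\bar v_{j-1}]}{x_{j+1/2}-x_{i-1/2}}$. The $k$th order ENO reconstruction: for each $i$, set $s_i^1=i$, and for $\ell=1,\dots,k-1$ set $s_i^{\ell+1}=s_i^\ell-1$ if $\bigl|[\bar v_{s_i^\ell-1},\dots,\bar v_{s_i^\ell+\ell-1}]\bigr|<\bigl|[\bar v_{s_i^\ell},\dots,\bar v_{s_i^\ell+\ell}]\bigr|$, and $s_i^{\ell+1}=s_i^\ell$ otherwise; put $s_i=s_i^k$. Then $p_i$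 is the unique polynomial of degree at most $k-1$ with $\frac{1}{|I_j|}\int_{I_j}p_i(x)\,dx=\bar v_j$ for $j=s_i,\dots,s_i+k-1$. Cell interface values: $v^-_{i+1/2}=p_i(x_{i+1/2})$, $v^+_{i+1/2}=p_{i+1}(x_{i+1/2})$. (For $k=2$: $s_i=i-1$ if $|\bar v_i-\bar v_{i-1}|<|\bar v_{i+1}-\bar v_i|$ and $s_i=i$ otherwise.) *)

From Stdlib Require Import Reals Lra ZArith.
Open Scope R_scope.

(* Uniform mesh: x_{i+1/2} = x_{1/2} + i h.  [xh x12 h i] = x_{i+1/2}. *)
Definition xh (x12 h : R) (i : Z) : R := x12 + IZR i * h.

Definition xmid (x12 h : R) (i : Z) : R := (xh x12 h (i - 1) + xh x12 h i) / 2.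

Definition eno2_s (v : Z -> R) (i : Z) : Z :=
  if Rlt_dec (Rabs (v i - v (i - 1)%Z)) (Rabs (v (i + 1)%Z - v i))
  then (i - 1)%Z else i.

(* p_i : the unique polynomial of degree <= 1 whose cell averages on
   I_{s_i}, I_{s_i+1} are v_{s_i}, v_{s_i+1}.  A degree <= 1 polynomial has
   cell average equal to its value at the cell midpoint, and the midpoints
   of consecutive cells are h apart, hence the explicit formula. *)
Definition eno2_p (x12 h : R) (v : Z -> R) (i : Z) (x : R) : R :=
  let s := eno2_s v i in
  v s + (v (s + 1)%Z - v s) * (x - xmid x12 h s) / h.

Definition vminus (x12 h : R) (v : Z -> R) (i : Z) : R :=
  eno2_p x12 h v i (xh x12 h i).
Definition vplus (x12 h : R) (v : Z -> R) (i : Z) : R :=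
  eno2_p x12 h v (i + 1)%Z (xh x12 h i).

Definition zpartial (a : Z -> R) (N : nat) : R :=
  sum_f_R0 (fun k => a (Z.of_nat k - Z.of_nat N)%Z) (2 * N).

Definition zsum (a : Z -> R) (l : R) : Prop := Un_cv (zpartial a) l.

From Stdlib Require Import Reals ZArith Lra Lia Psatz.
Open Scope R_scope.

(* Write d_i = v_{i+1} - v_i and let m_i be the ENO slope, i.e. whichever of
   d_{i-1}, d_i is smaller in modulus.  Then v^-_{i+1/2} = v_i + m_i/2 and
   v^+_{i+1/2} = v_{i+1} - m_{i+1}/2, so the jump product is
   d_i (d_i - m_i)/2 + d_i (d_i - m_{i+1})/2, a sum of two nonnegative terms.
   Since |d|^3 = d g with g = d |d|, summation by parts turns sum |d_i|^3 into
   - sum v_{i+1} (g_{i+1} - g_i) plus boundary terms, and a case analysis shows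
   that |g_{i+1} - g_i| is at most 4 times the two jump-product terms sharing
   the slope m_{i+1}.  This gives C = 4; the boundary terms vanish because
   d_i -> 0 at both ends. *)

Definition fwd_diff (v : Z -> R) (i : Z) : R := v (i + 1)%Z - v i.

Definition eno2_slope (v : Z -> R) (i : Z) : R :=
  if Rlt_dec (Rabs (fwd_diff v (i - 1))) (Rabs (fwd_diff v i))
  then fwd_diff v (i - 1) else fwd_diff v i.

Definition signed_sqr (x : R) : R := x * Rabs x.

Definition defect (x m : R) : R := / 2 * x * (x - m).

Definition eno2_dissipation (v : Z -> R) (i : Z) : R :=
  defect (fwd_diff v i) (eno2_slope v i) +
  defect (fwd_diff v i) (eno2_slope v (i + 1)).

Lemma Rabs_cube (x : R) : Rabs x ^ 3 = x * signed_sqr x.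
Proof. unfold signed_sqr, Rabs; destruct (Rcase_abs x); ring. Qed.

Lemma defect_ge0 (x m : R) : Rabs m <= Rabs x -> 0 <= defect x m.
Proof.
  unfold defect, Rabs; destruct (Rcase_abs x), (Rcase_abs m); nra.
Qed.

Lemma defect_le_sqr (x m : R) : Rabs m <= Rabs x -> defect x m <= x * x.
Proof.
  unfold defect, Rabs; destruct (Rcase_abs x), (Rcase_abs m); nra.
Qed.

Lemma signed_sqr_variation (x y : R) :
  let m := if Rlt_dec (Rabs x) (Rabs y) then x else y in
  Rabs (signed_sqr y - signed_sqr x) <= 4 * (defect x m + defect y m).
Proof.
  unfold signed_sqr, defect; simpl.
  destruct (Rlt_dec (Rabs x) (Rabs y)); unfold Rabs in *;
  destruct (Rcase_abs x), (Rcase_abs y), (Rcase_abs (y * _ - x * _)); nra.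
Qed.

Lemma eno2_slope_cases (v : Z -> R) (i : Z) :
  (eno2_s v i = (i - 1)%Z /\ eno2_slope v i = fwd_diff v (i - 1)) \/
  (eno2_s v i = i /\ eno2_slope v i = fwd_diff v i).
Proof.
  unfold eno2_s, eno2_slope, fwd_diff.
  replace (i - 1 + 1)%Z with i by ring.
  destruct Rlt_dec; auto.
Qed.

Lemma Rabs_eno2_slope_le (v : Z -> R) (i : Z) :
  Rabs (eno2_slope v i) <= Rabs (fwd_diff v i).
Proof. unfold eno2_slope; destruct Rlt_dec; lra. Qed.

Lemma Rabs_eno2_slope_succ_le (v : Z -> R) (i : Z) :
  Rabs (eno2_slope v (i + 1)) <= Rabs (fwd_diff v i).
Proof.
  unfold eno2_slope; replace (i + 1 - 1)%Z with i by ring.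
  destruct Rlt_dec; lra.
Qed.

Lemma eno2_dissipation_ge0 (v : Z -> R) (i : Z) : 0 <= eno2_dissipation v i.
Proof.
  unfold eno2_dissipation.
  pose proof (defect_ge0 _ _ (Rabs_eno2_slope_le v i)).
  pose proof (defect_ge0 _ _ (Rabs_eno2_slope_succ_le v i)).
  lra.
Qed.

Lemma eno2_dissipation_le (v : Z -> R) (i : Z) :
  eno2_dissipation v i <= 2 * Rabs (fwd_diff v i) ^ 2.
Proof.
  unfold eno2_dissipation.
  pose proof (defect_le_sqr _ _ (Rabs_eno2_slope_le v i)).
  pose proof (defect_le_sqr _ _ (Rabs_eno2_slope_succ_le v i)).
  rewrite pow2_abs; simpl; lra.
Qed.

Lemma signed_sqr_fwd_diff_variation (v : Z -> R) (i : Z) :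
  Rabs (signed_sqr (fwd_diff v (i + 1)) - signed_sqr (fwd_diff v i)) <=
  4 * (defect (fwd_diff v i) (eno2_slope v (i + 1)) +
       defect (fwd_diff v (i + 1)) (eno2_slope v (i + 1))).
Proof.
  pose proof (signed_sqr_variation (fwd_diff v i) (fwd_diff v (i + 1))) as H.
  unfold eno2_slope; replace (i + 1 - 1)%Z with i by ring.
  simpl in H; destruct Rlt_dec; exact H.
Qed.

Lemma eno2_p_at_interface (x12 h : R) (v : Z -> R) (j i : Z) : h <> 0 ->
  eno2_p x12 h v j (xh x12 h i) =
  v (eno2_s v j) + fwd_diff v (eno2_s v j) * (IZR i - IZR (eno2_s v j) + / 2).
Proof.
  intros Hh; unfold eno2_p, xmid, xh, fwd_diff; rewrite minus_IZR; field; exact Hh.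
Qed.

Lemma vminus_eq (x12 h : R) (v : Z -> R) (i : Z) : h <> 0 ->
  vminus x12 h v i = v i + eno2_slope v i / 2.
Proof.
  intros Hh; unfold vminus; rewrite eno2_p_at_interface by exact Hh.
  destruct (eno2_slope_cases v i) as [[-> ->] | [-> ->]];
  unfold fwd_diff; rewrite ?minus_IZR; replace (i - 1 + 1)%Z with i by ring;
  field.
Qed.

Lemma vplus_eq (x12 h : R) (v : Z -> R) (i : Z) : h <> 0 ->
  vplus x12 h v i = v (i + 1)%Z - eno2_slope v (i + 1) / 2.
Proof.
  intros Hh; unfold vplus; rewrite eno2_p_at_interface by exact Hh.
  destruct (eno2_slope_cases v (i + 1)) as [[-> ->] | [-> ->]];
  unfold fwd_diff; rewrite ?minus_IZR, ?plus_IZR;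
  replace (i + 1 - 1)%Z with i by ring; replace (i + 1 - 1 + 1)%Z with (i + 1)%Z by ring;
  rewrite ?plus_IZR; field.
Qed.

Lemma eno2_jump_product (x12 h : R) (v : Z -> R) (i : Z) : h <> 0 ->
  (v (i + 1)%Z - v i) * (vplus x12 h v i - vminus x12 h v i) = eno2_dissipation v i.
Proof.
  intros Hh; rewrite vplus_eq, vminus_eq by exact Hh.
  unfold eno2_dissipation, defect, fwd_diff; field.
Qed.

Lemma zpartial_S (a : Z -> R) (n : nat) :
  zpartial a (S n) = zpartial a n + a (- Z.of_nat (S n))%Z + a (Z.of_nat (S n)).
Proof.
  unfold zpartial; replace (2 * S n)%nat with (S (S (2 * n))) by lia.
  rewrite tech5, (decomp_sum _ (S (2 * n))) by lia; simpl Init.Nat.pred.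
  rewrite (sum_eq (fun k => a (Z.of_nat (S k) - Z.of_nat (S n))%Z)
                  (fun k => a (Z.of_nat k - Z.of_nat n)%Z)).
  - replace (Z.of_nat 0 - Z.of_nat (S n))%Z with (- Z.of_nat (S n))%Z by lia.
    replace (Z.of_nat (S (S (2 * n))) - Z.of_nat (S n))%Z with (Z.of_nat (S n)) by lia.
    replace (n + (n + 0))%nat with (2 * n)%nat by lia; lra.
  - intros k _; f_equal; lia.
Qed.

Lemma zpartial_le (a b : Z -> R) (n : nat) :
  (forall i, a i <= b i) -> zpartial a n <= zpartial b n.
Proof. intros H; apply sum_Rle; intros; apply H. Qed.

Lemma zpartial_scal (c : R) (a : Z -> R) (n : nat) :
  zpartial (fun i => c * a i) n = c * zpartial a n.
Proof.
  unfold zpartial; rewrite scal_sum; apply sum_eq; intros; apply Rmult_comm.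
Qed.

Lemma zpartial_growing (a : Z -> R) :
  (forall i, 0 <= a i) -> Un_growing (zpartial a).
Proof.
  intros Ha n; rewrite zpartial_S.
  pose proof (Ha (- Z.of_nat (S n))%Z); pose proof (Ha (Z.of_nat (S n))); lra.
Qed.

Lemma zsum_ext (a b : Z -> R) (l : R) :
  (forall i, a i = b i) -> zsum a l -> zsum b l.
Proof.
  intros E H e He; destruct (H e He) as [N HN]; exists N; intros n Hn.
  unfold zpartial; rewrite (sum_eq _ (fun k => a (Z.of_nat k - Z.of_nat n)%Z)).
  - apply HN, Hn.
  - intros; symmetry; apply E.
Qed.

Lemma zsum_dominated (a w : Z -> R) (c l : R) :
  0 <= c -> (forall i, 0 <= a i) -> (forall i, 0 <= w i) ->
  (forall i, a i <= c * w i) -> zsum w l -> exists L, zsum a L.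
Proof.
  intros Hc Ha Hw Haw Hl.
  destruct (growing_cv (zpartial a)) as [L HL].
  - apply zpartial_growing, Ha.
  - exists (c * l); intros x [n ->].
    apply Rle_trans with (zpartial (fun i => c * w i) n).
    + apply zpartial_le, Haw.
    + rewrite zpartial_scal; apply Rmult_le_compat_l; [exact Hc|].
      apply growing_ineq; [apply zpartial_growing, Hw | exact Hl].
  - exists L; exact HL.
Qed.

Lemma zsum_tails_cv0 (w : Z -> R) (l : R) :
  (forall i, 0 <= w i) -> zsum w l ->
  Un_cv (fun n => w (Z.of_nat n) + w (- Z.of_nat n)%Z) 0.
Proof.
  intros Hw H e He; destruct (H (e / 2)) as [N HN]; [lra|].
  exists (S N); intros [|k] Hk; [lia|].
  pose proof (HN (S k) ltac:(lia)) as HS; pose proof (HN k ltac:(lia)) as Hk'.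
  rewrite zpartial_S in HS; unfold R_dist in *.
  pose proof (Hw (Z.of_nat (S k))); pose proof (Hw (- Z.of_nat (S k))%Z).
  rewrite Rminus_0_r, Rabs_right by lra.
  unfold Rabs in HS, Hk'; destruct Rcase_abs, Rcase_abs; lra.
Qed.

Lemma Un_cv_const (c : R) : Un_cv (fun _ => c) c.
Proof.
  intros e He; exists 0%nat; intros; unfold R_dist; rewrite Rminus_diag, Rabs_R0; exact He.
Qed.

Section BoundedSequence.

Variables (v : Z -> R) (M : R).
Hypothesis v_bounded : forall i, Rabs (v i) <= M.

Lemma bound_ge0 : 0 <= M.
Proof. pose proof (v_bounded 0); pose proof (Rabs_pos (v 0%Z)); lra. Qed.

Lemma Rabs_fwd_diff_le (i : Z) : Rabs (fwd_diff v i) <= 2 * M.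
Proof.
  unfold fwd_diff, Rminus.
  pose proof (Rabs_triang (v (i + 1)%Z) (- v i)); rewrite Rabs_Ropp in *.
  pose proof (v_bounded i); pose proof (v_bounded (i + 1)%Z); lra.
Qed.

Lemma Rabs_fwd_diff_sqr_le (i : Z) :
  Rabs (fwd_diff v i) ^ 2 <= 2 * M * Rabs (fwd_diff v i).
Proof.
  pose proof (Rabs_fwd_diff_le i); pose proof (Rabs_pos (fwd_diff v i)); simpl; nra.
Qed.

Lemma Rabs_fwd_diff_cube_le (i : Z) :
  Rabs (fwd_diff v i) ^ 3 <= 4 * M * M * Rabs (fwd_diff v i).
Proof.
  pose proof (Rabs_fwd_diff_le i); pose proof (Rabs_fwd_diff_sqr_le i).
  pose proof (Rabs_pos (fwd_diff v i)); pose proof bound_ge0.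
  change (Rabs (fwd_diff v i) ^ 3)
    with (Rabs (fwd_diff v i) * Rabs (fwd_diff v i) ^ 2).
  nra.
Qed.

Lemma eno2_dissipation_le_bound (i : Z) :
  eno2_dissipation v i <= 4 * M * Rabs (fwd_diff v i).
Proof.
  pose proof (eno2_dissipation_le v i); pose proof (Rabs_fwd_diff_sqr_le i); lra.
Qed.

Lemma Rabs_mul_signed_sqr_le (i j : Z) :
  Rabs (v j * signed_sqr (fwd_diff v i)) <= 2 * M * M * Rabs (fwd_diff v i).
Proof.
  unfold signed_sqr; rewrite !Rabs_mult, Rabs_Rabsolu.
  pose proof (v_bounded j); pose proof (Rabs_fwd_diff_le i).
  pose proof (Rabs_pos (v j)); pose proof (Rabs_pos (fwd_diff v i)).
  assert (Rabs (fwd_diff v i) * Rabs (fwd_diff v i) <= 2 * M * Rabs (fwd_diff v i)) by nra.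
  nra.
Qed.

Lemma summation_by_parts_step (j : Z) :
  v (j + 1)%Z * (signed_sqr (fwd_diff v j) - signed_sqr (fwd_diff v (j + 1))) <=
  4 * M * (defect (fwd_diff v j) (eno2_slope v (j + 1)) +
           defect (fwd_diff v (j + 1)) (eno2_slope v (j + 1))).
Proof.
  pose proof (signed_sqr_fwd_diff_variation v j) as Hvar.
  pose proof (v_bounded (j + 1)%Z).
  pose proof (Rabs_pos (v (j + 1)%Z)).
  apply Rle_trans with (1 := Rle_abs _); rewrite Rabs_mult, Rabs_minus_sym.
  pose proof (Rabs_pos (signed_sqr (fwd_diff v (j + 1)) - signed_sqr (fwd_diff v j))).
  nra.
Qed.

Lemma sum_cube_by_parts (lo : Z) (n : nat) :
  let a := (- lo)%Z in
  let b := (Z.of_nat n - lo)%Z in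
  sum_f_R0 (fun k => Rabs (fwd_diff v (Z.of_nat k - lo)) ^ 3) n <=
  v (b + 1)%Z * signed_sqr (fwd_diff v b) - v a * signed_sqr (fwd_diff v a) +
  4 * M * (sum_f_R0 (fun k => eno2_dissipation v (Z.of_nat k - lo)) n -
           defect (fwd_diff v a) (eno2_slope v a) -
           defect (fwd_diff v b) (eno2_slope v (b + 1))).
Proof.
  cbv zeta; induction n as [|n IH].
  - change (sum_f_R0 ?f 0) with (f 0%nat); cbv beta.
    replace (Z.of_nat 0 - lo)%Z with (- lo)%Z by lia.
    rewrite Rabs_cube; unfold eno2_dissipation, fwd_diff at 1; ring_simplify; lra.
  - rewrite !tech5.
    replace (Z.of_nat (S n) - lo)%Z with (Z.of_nat n - lo + 1)%Z by lia.
    pose proof (summation_by_parts_step (Z.of_nat n - lo)).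
    set (cubes := sum_f_R0 (fun k => Rabs (fwd_diff v (Z.of_nat k - lo)) ^ 3) n) in *.
    set (diss := sum_f_R0 (fun k => eno2_dissipation v (Z.of_nat k - lo)) n) in *.
    rewrite Rabs_cube; unfold eno2_dissipation, fwd_diff at 1; lra.
Qed.

Lemma zpartial_cube_le (N : nat) :
  zpartial (fun i => Rabs (fwd_diff v i) ^ 3) N <=
  4 * M * zpartial (eno2_dissipation v) N +
  2 * M * M * (Rabs (fwd_diff v (Z.of_nat N)) + Rabs (fwd_diff v (- Z.of_nat N))).
Proof.
  pose proof (sum_cube_by_parts (Z.of_nat N) (2 * N)) as H; cbv zeta in H.
  replace (Z.of_nat (2 * N) - Z.of_nat N)%Z with (Z.of_nat N) in H by lia.
  pose proof (Rabs_mul_signed_sqr_le (Z.of_nat N) (Z.of_nat N + 1)) as Hhi.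
  pose proof (Rabs_mul_signed_sqr_le (- Z.of_nat N) (- Z.of_nat N)) as Hlo.
  pose proof (Rle_abs (v (Z.of_nat N + 1)%Z * signed_sqr (fwd_diff v (Z.of_nat N)))).
  pose proof (Rle_abs (- (v (- Z.of_nat N)%Z * signed_sqr (fwd_diff v (- Z.of_nat N)))))
    as Hlo'; rewrite Rabs_Ropp in Hlo'.
  pose proof (defect_ge0 _ _ (Rabs_eno2_slope_succ_le v (Z.of_nat N))).
  pose proof (defect_ge0 _ _ (Rabs_eno2_slope_le v (- Z.of_nat N))).
  pose proof bound_ge0.
  unfold zpartial; cbv beta; nra.
Qed.

End BoundedSequence.

Theorem mainTheorem3 :
  exists C : R, 0 < C /\
  forall (x12 h : R) (v : Z -> R),
    0 < h ->
    (exists B : R, forall i : Z, Rabs (v i) <= B) ->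
    (exists l : R, zsum (fun i => Rabs (v (i + 1)%Z - v i)) l) ->
    forall M : R, is_lub (fun r => exists i : Z, r = Rabs (v i)) M ->
    exists L R0 : R,
      zsum (fun i => Rabs (v (i + 1)%Z - v i) ^ 3) L /\
      zsum (fun i => (v (i + 1)%Z - v i) *
                     (vplus x12 h v i - vminus x12 h v i)) R0 /\
      L <= C * M * R0.
Proof.
  exists 4; split; [lra|].
  intros x12 h v Hh _ [l Hl] M [Hub _].
  assert (HM : forall i, Rabs (v i) <= M) by (intros i; apply Hub; exists i; reflexivity).
  pose proof (bound_ge0 v M HM) as HM0.
  change (zsum (fun i => Rabs (fwd_diff v i)) l) in Hl.
  assert (Hd : forall i, 0 <= Rabs (fwd_diff v i)) by (intros; apply Rabs_pos).
  destruct (zsum_dominated (fun i => Rabs (fwd_diff v i) ^ 3)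
              (fun i => Rabs (fwd_diff v i)) (4 * M * M) l) as [L HL].
  { nra. }
  { intros; apply pow_le, Hd. }
  { exact Hd. }
  { exact (Rabs_fwd_diff_cube_le v M HM). }
  { exact Hl. }
  destruct (zsum_dominated (eno2_dissipation v) (fun i => Rabs (fwd_diff v i)) (4 * M) l)
    as [R0 HR]; auto using eno2_dissipation_ge0, eno2_dissipation_le_bound; [lra|].
  exists L, R0; split; [exact HL|]; split.
  { apply (zsum_ext (eno2_dissipation v)); [|exact HR].
    intros i; symmetry; apply eno2_jump_product; lra. }
  replace (4 * M * R0) with (4 * M * R0 + 2 * M * M * 0) by ring.
  apply Rle_cv_lim with (1 := zpartial_cube_le v M HM) (2 := HL).
  apply CV_plus; apply CV_mult; auto using Un_cv_const.
  exact (zsum_tails_cv0 _ _ Hd Hl).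
Qed.
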